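(* Let $n\in\mathbb{N}$ and let $v(z)=\big(\log\frac{e}{1-|z|}\big)^{-n}$ for $z\in\mathbb{D}$. Then $\sup_{t\in[0,1)}\|C_t\|_{H^\infty_v\to H^\infty_v}=\infty$.
   Context: $\mathbb{D}=\{z\in\mathbb{C}:|z|<1\}$ and $H(\mathbb{D})$ is the space of holomorphic functions on $\mathbb{D}$. For a weight $v$ (continuous non-increasing $v\colon[0,1)\to(0,\infty)$, with $v(z):=v(|z|)$), $H^\infty_v=\{f\in H(\mathbb{D}):\|f\|_{\infty,v}:=\sup_{z\in\mathbb{D}}|f(z)|v(z)<\infty\}$ with norm $\|\cdot\|_{\infty,v}$. For $t\in[0,1)$ the generalized Cesàro operator $C_t$ is defined on $f\in H(\mathbb{D})$ by $C_tf(0)=f(0)$ and $C_tf(z)=\frac{1}{z}\int_0^z\frac{f(\xi)}{1-t\xi}\,d\xi$ for $z\neq0$; it is a bounded operator on $H^\infty_v$. *)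

From Stdlib Require Import Reals.
From Coquelicot Require Import Coquelicot.
Open Scope R_scope.

Definition inD (z : C) : Prop := Cmod z < 1.

Definition holo_D (f : C -> C) : Prop :=
  forall z : C, inD z -> @ex_derive C_AbsRing C_NormedModule f z.

(* the weight v(r) = (log (e/(1-r)))^(-n), used as v(z) := v(|z|) *)
Definition vlog (n : nat) (r : R) : R := / (ln (exp 1 / (1 - r))) ^ n.

Definition wnorm (v : R -> R) (f : C -> C) : Rbar :=
  Lub_Rbar (fun x => exists z : C, inD z /\ x = Cmod (f z) * v (Cmod z)).

(* generalized Cesaro operator: C_t f(0) = f(0),
   C_t f(z) = (1/z) int_0^z f(xi)/(1 - t xi) dxi, the path integral being
   along the segment [0,z], xi = s z, dxi = z ds. *)
Definition Ces (t : R) (f : C -> C) (z : C) : C :=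
  if Req_EM_T (Cmod z) 0 then f z
  else Cdiv (@RInt C_R_CompleteNormedModule (fun s : R => Cmult (Cdiv (f (Cmult (RtoC s) z))
                                       (Cminus 1 (Cmult (RtoC (t * s)) z))) z)
                  0 1) z.

Definition Ces_opnorm (v : R -> R) (t : R) : Rbar :=
  Rbar_lub (fun y => exists f : C -> C,
              holo_D f /\ Rbar_le (wnorm v f) 1 /\ y = wnorm v (Ces t f)).

(* Test C_t on polynomial truncations f = (1 + sum_(k<=N) z^k/k)^n of
   (log (e/(1-z)))^n.  Since sum_(k<=N) r^k/k <= -log (1-r), these lie in the unit
   ball of H^oo_v.  Given lam >= 1 put d = e^-lam and evaluate C_x f at the point
   x = 1 - d^2 (with t = x): for N large, f >= lam^n on [1 - d, x], and the integral
   of 1/(1 - x xi) over that interval is at least lam - 1, while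
   v(x) = (1 + 2 lam)^-n >= (3 lam)^-n.  Hence ||C_x|| >= (lam - 1)/3^n. *)

From Stdlib Require Import Reals Lra Lia.
From Coquelicot Require Import Coquelicot.
Open Scope R_scope.

Fixpoint log_series (N : nat) (u : R) : R :=
  match N with O => 0 | S k => log_series k u + / INR (S k) * u ^ S k end.

Fixpoint geom_series (N : nat) (u : R) : R :=
  match N with O => 0 | S k => geom_series k u + u ^ k end.

Lemma geom_series_mul N u : geom_series N u * (1 - u) = 1 - u ^ N.
Proof. induction N as [|N IH]; simpl; [ring|]. rewrite Rmult_plus_distr_r, IH. ring. Qed.

Lemma is_derive_log_series N u : is_derive (log_series N) u (geom_series N u).
Proof.
  induction N as [|N IH]; simpl.
  - apply (is_derive_const 0 u).
  - apply (is_derive_plus (log_series N) (fun u => / INR (S N) * u ^ S N)); [exact IH|].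
    replace (u ^ N) with (/ INR (S N) * (INR (S N) * 1 * u ^ pred (S N))).
    + apply is_derive_scal, is_derive_pow, (is_derive_id u).
    + simpl pred. field. apply not_0_INR. lia.
Qed.

Lemma log_series_0 N : log_series N 0 = 0.
Proof. induction N as [|N IH]; simpl; [easy|]. rewrite IH. ring. Qed.

Lemma log_series_nonneg_le N u w : 0 <= u <= w -> 0 <= log_series N u <= log_series N w.
Proof.
  intros Huw. induction N as [|N IH]; cbn [log_series]; [lra|].
  assert (0 < / INR (S N)) by (apply Rinv_0_lt_compat, lt_0_INR; lia).
  assert (0 <= u ^ S N <= w ^ S N) by (split; [apply pow_le | apply pow_incr]; lra).
  assert (/ INR (S N) * u ^ S N <= / INR (S N) * w ^ S N) by (apply Rmult_le_compat_l; lra).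
  assert (0 <= / INR (S N) * u ^ S N) by (apply Rmult_le_pos; lra).
  lra.
Qed.

(* The remainder has derivative r^N / (1 - r) and vanishes at 0. *)
Lemma log_remainder_bounds N r : 0 <= r < 1 ->
  0 <= - ln (1 - r) - log_series N r <= r ^ S N / (1 - r).
Proof.
  intros Hr. set (rem := fun r => - ln (1 - r) - log_series N r).
  assert (Hrem : forall c, c < 1 -> is_derive rem c (c ^ N / (1 - c))).
  { intros c Hc. unfold rem.
    replace (c ^ N / (1 - c)) with (/ (1 - c) - geom_series N c).
    - apply (is_derive_minus (fun r => - ln (1 - r))); [|apply is_derive_log_series].
      auto_derive; [lra|]. field. lra.
    - apply (Rmult_eq_reg_r (1 - c)); [|lra].
      rewrite Rmult_minus_distr_r, geom_series_mul. field. lra. }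
  destruct (MVT_gen rem 0 r (fun c => c ^ N / (1 - c))) as [c [Hc Hmvt]].
  - intros c Hc. rewrite Rmin_left, Rmax_right in Hc by lra. apply Hrem. lra.
  - intros c Hc. rewrite Rmin_left, Rmax_right in Hc by lra.
    apply continuity_pt_filterlim, (@ex_derive_continuous R_AbsRing R_NormedModule).
    eexists. apply Hrem. lra.
  - rewrite Rmin_left, Rmax_right in Hc by lra.
    assert (Hrem0 : rem 0 = 0).
    { unfold rem. rewrite log_series_0, !Rminus_0_r, ln_1. ring. }
    rewrite Hrem0, !Rminus_0_r in Hmvt. fold (rem r). rewrite Hmvt.
    assert (0 <= c ^ N <= r ^ N) by (split; [apply pow_le | apply pow_incr]; lra).
    assert (0 <= c ^ N / (1 - c) <= r ^ N / (1 - r)).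
    { split; [apply Rdiv_le_0_compat; lra|].
      apply Rmult_le_compat; try lra.
      - left. apply Rinv_0_lt_compat. lra.
      - apply Rinv_le_contravar; lra. }
    replace (r ^ S N / (1 - r)) with (r ^ N / (1 - r) * r) by (simpl; field; lra).
    split; nra.
Qed.

Lemma log_series_le N r : 0 <= r < 1 -> log_series N r <= - ln (1 - r).
Proof. intros Hr. generalize (log_remainder_bounds N r Hr). lra. Qed.

Lemma log_series_approx u : 0 <= u < 1 -> exists N, - ln (1 - u) - 1 < log_series N u.
Proof.
  intros Hu.
  destruct (pow_lt_1_zero u ltac:(rewrite Rabs_right; lra) (1 - u) ltac:(lra)) as [N HN].
  exists N. specialize (HN (S N) ltac:(lia)).
  rewrite Rabs_right in HN by (apply Rle_ge, pow_le; lra).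
  assert (u ^ S N / (1 - u) < 1).
  { apply (Rmult_lt_reg_r (1 - u)); [lra|]. unfold Rdiv. rewrite Rmult_assoc, Rinv_l; lra. }
  generalize (log_remainder_bounds N u Hu). lra.
Qed.

Lemma Rle_div_self a x : 0 <= a -> 0 < x <= 1 -> a <= a / x.
Proof.
  intros Ha Hx. apply (Rmult_le_reg_r x); [lra|].
  unfold Rdiv. rewrite Rmult_assoc, Rinv_l by lra. nra.
Qed.

Lemma Rbar_lub_p_infty (E : Rbar -> Prop) :
  (forall M : R, exists y, E y /\ Rbar_le M y) -> Rbar_lub E = p_infty.
Proof.
  intros Hunb. unfold Rbar_lub. destruct (Rbar_ex_lub E) as [l Hl]. simpl.
  destruct Hl as [Hub _].
  assert (Hle : forall M : R, Rbar_le M l).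
  { intros M. destruct (Hunb M) as [y [Hy HMy]]. exact (Rbar_le_trans _ _ _ HMy (Hub y Hy)). }
  destruct l as [r | | ]; [| easy |].
  - specialize (Hle (r + 1)). simpl in Hle. lra.
  - destruct (Hle 0).
Qed.

Lemma is_RInt_RtoC (f : R -> R) a b l :
  is_RInt f a b l -> @is_RInt C_R_NormedModule (fun s => RtoC (f s)) a b (RtoC l).
Proof.
  intros Hf.
  apply (is_RInt_fct_extend_pair (U := R_NormedModule) (V := R_NormedModule)); [exact Hf|].
  assert (H0 := is_RInt_const (V := R_NormedModule) a b 0).
  rewrite (@scal_zero_r R_Ring R_ModuleSpace) in H0.
  apply (is_RInt_ext (V := R_NormedModule) (fun _ => 0)); [easy | exact H0].
Qed.

(* Coquelicot's product rule views C as a normed module over itself, a structure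
   that is not convertible to [C_NormedModule] used by [holo_D]. *)
Definition entire (f : C -> C) : Prop :=
  forall z : C, @ex_derive C_AbsRing (AbsRing_NormedModule C_AbsRing) f z.

Lemma holo_D_of_entire f : entire f -> holo_D f.
Proof.
  intros Hf z _. destruct (Hf z) as [l [Hlin Hdom]]. exists l. split.
  - destruct Hlin as [Hplus Hscal [M [HM Hbound]]]. split; auto. exists M. auto.
  - exact Hdom.
Qed.

Lemma entire_const (a : C) : entire (fun _ => a).
Proof. intro z. exists zero. apply is_derive_const. Qed.

Lemma entire_id : entire (fun z => z).
Proof. intro z. exists one. apply (is_derive_id (K := C_AbsRing)). Qed.

Lemma entire_plus f g : entire f -> entire g -> entire (fun z => Cplus (f z) (g z)).
Proof.
  intros Hf Hg z. destruct (Hf z) as [df Hdf], (Hg z) as [dg Hdg].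
  eexists.
  exact (@is_derive_plus C_AbsRing (AbsRing_NormedModule C_AbsRing) f g z df dg Hdf Hdg).
Qed.

Lemma entire_mult f g : entire f -> entire g -> entire (fun z => Cmult (f z) (g z)).
Proof.
  intros Hf Hg z. destruct (Hf z) as [df Hdf], (Hg z) as [dg Hdg].
  eexists. exact (is_derive_mult f g z df dg Hdf Hdg Cmult_comm).
Qed.

Lemma entire_pow f n : entire f -> entire (fun z => Cpow (f z) n).
Proof. intros Hf. induction n; simpl; [apply entire_const | now apply entire_mult]. Qed.

Lemma wnorm_le v f (M : R) :
  (forall z, inD z -> Cmod (f z) * v (Cmod z) <= M) -> Rbar_le (wnorm v f) M.
Proof. intros H. apply Lub_Rbar_correct. intros y [z [Hz ->]]. exact (H z Hz). Qed.

Lemma wnorm_ge v f z : inD z -> Rbar_le (Cmod (f z) * v (Cmod z)) (wnorm v f).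
Proof. intros Hz. apply Lub_Rbar_correct. now exists z. Qed.

Lemma Ces_opnorm_ge v t f : holo_D f -> Rbar_le (wnorm v f) 1 ->
  Rbar_le (wnorm v (Ces t f)) (Ces_opnorm v t).
Proof.
  intros Hf Hnorm. unfold Ces_opnorm, Rbar_lub.
  destruct (Rbar_ex_lub _) as [l Hl]. simpl. apply Hl. now exists f.
Qed.

Section CesaroIntegral.

Variables (t : R) (g : R -> R).

Lemma continuous_Cesaro_integrand xi :
  continuous g xi -> t * xi < 1 -> continuous (fun xi => g xi / (1 - t * xi)) xi.
Proof.
  intros Hg Hxi. apply (continuous_mult (K := R_AbsRing)); [exact Hg|].
  apply continuous_Rinv_comp; [|lra].
  apply (ex_derive_continuous (K := R_AbsRing) (V := R_NormedModule)). auto_derive. easy.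
Qed.

Lemma ex_RInt_Cesaro_integrand a b : 0 <= t -> a <= b -> t * b < 1 ->
  (forall xi, a <= xi <= b -> continuous g xi) ->
  ex_RInt (fun xi => g xi / (1 - t * xi)) a b.
Proof.
  intros Ht Hab Htb Hg. apply (ex_RInt_continuous (V := R_CompleteNormedModule)).
  intros xi Hxi. rewrite Rmin_left, Rmax_right in Hxi by lra.
  apply continuous_Cesaro_integrand; [now apply Hg|].
  assert (t * xi <= t * b) by (apply Rmult_le_compat_l; lra). lra.
Qed.

Lemma is_RInt_Cesaro_kernel a b : 0 < t -> t * b < 1 -> a <= b ->
  is_RInt (fun xi => / (1 - t * xi)) a b ((ln (1 - t * a) - ln (1 - t * b)) / t).
Proof.
  intros Ht Htb Hab.
  assert (Hpos : forall xi, xi <= b -> 0 < 1 - t * xi).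
  { intros xi Hxi. assert (t * xi <= t * b) by (apply Rmult_le_compat_l; lra). lra. }
  replace ((ln (1 - t * a) - ln (1 - t * b)) / t)
    with (minus (- ln (1 - t * b) / t) (- ln (1 - t * a) / t))
    by (unfold minus, plus, opp; simpl; field; lra).
  apply (is_RInt_derive (V := R_CompleteNormedModule) (fun xi => - ln (1 - t * xi) / t));
    intros xi Hxi; rewrite Rmin_left, Rmax_right in Hxi by lra;
    assert (0 < 1 - t * xi) by (apply Hpos; lra).
  - auto_derive; [lra|]. field. lra.
  - apply (ex_derive_continuous (K := R_AbsRing) (V := R_NormedModule)). auto_derive. lra.
Qed.

(* On [u, x] bound g from below by g u, and drop the (nonnegative) integral over [0, u]. *)
Lemma RInt_Cesaro_integrand_ge x u : 0 < t -> 0 <= u <= x -> t * x < 1 ->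
  (forall xi, 0 <= xi <= x -> continuous g xi) ->
  (forall xi, 0 <= xi <= x -> 0 <= g xi) ->
  (forall xi, u <= xi <= x -> g u <= g xi) ->
  g u * ((ln (1 - t * u) - ln (1 - t * x)) / t)
    <= RInt (fun xi => g xi / (1 - t * xi)) 0 x.
Proof.
  intros Ht Hux Htx Hcont Hnonneg Hmono.
  assert (Hpos : forall xi, xi <= x -> 0 < 1 - t * xi).
  { intros xi Hxi. assert (t * xi <= t * x) by (apply Rmult_le_compat_l; lra). lra. }
  assert (Ht0 : 0 <= t) by lra.
  assert (E1 := ex_RInt_Cesaro_integrand 0 u Ht0 ltac:(lra) ltac:(generalize (Hpos u); lra)
                  ltac:(intros; apply Hcont; lra)).
  assert (E2 := ex_RInt_Cesaro_integrand u x Ht0 ltac:(lra) Htx ltac:(intros; apply Hcont; lra)).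
  rewrite <- (RInt_Chasles (V := R_CompleteNormedModule) _ 0 u x E1 E2).
  assert (I1 : 0 <= RInt (fun xi => g xi / (1 - t * xi)) 0 u).
  { apply RInt_ge_0; [lra | exact E1|]. intros xi Hxi.
    apply Rdiv_le_0_compat; [apply Hnonneg; lra | apply Hpos; lra]. }
  assert (Hconst := is_RInt_Cesaro_kernel u x Ht Htx (proj2 Hux)).
  apply (is_RInt_scal (V := R_NormedModule) _ _ _ (g u)) in Hconst.
  assert (I2 : g u * ((ln (1 - t * u) - ln (1 - t * x)) / t)
                 <= RInt (fun xi => g xi / (1 - t * xi)) u x).
  { apply (is_RInt_le _ _ u x _ _ (proj2 Hux) Hconst (RInt_correct _ _ _ E2)).
    intros xi Hxi. unfold scal; simpl; unfold mult; simpl.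
    apply Rmult_le_compat_r; [left; apply Rinv_0_lt_compat, Hpos; lra|].
    apply Hmono. lra. }
  unfold plus; simpl. lra.
Qed.

Lemma Ces_RtoC f x : 0 <= t -> 0 < x -> t * x < 1 ->
  (forall u, 0 <= u <= x -> f (RtoC u) = RtoC (g u)) ->
  ex_RInt (fun xi => g xi / (1 - t * xi)) 0 x ->
  Ces t f (RtoC x) = RtoC (RInt (fun xi => g xi / (1 - t * xi)) 0 x / x).
Proof.
  intros Ht Hx Htx Hfg Hex. unfold Ces.
  destruct Req_EM_T as [H0|_]; [rewrite Cmod_R, Rabs_right in H0; lra|].
  assert (Hsubst : is_RInt (fun s => scal x (g (x * s + 0) / (1 - t * (x * s + 0)))) 0 1
                     (RInt (fun xi => g xi / (1 - t * xi)) 0 x)).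
  { apply (is_RInt_comp_lin (fun xi => g xi / (1 - t * xi)) x 0 0 1).
    rewrite Rmult_0_r, Rmult_1_r, !Rplus_0_r.
    exact (RInt_correct _ _ _ Hex). }
  apply is_RInt_RtoC in Hsubst.
  assert (Hint : @is_RInt C_R_NormedModule
    (fun s => Cmult (Cdiv (f (Cmult (RtoC s) (RtoC x)))
                          (Cminus 1 (Cmult (RtoC (t * s)) (RtoC x)))) (RtoC x))
    0 1 (RtoC (RInt (fun xi => g xi / (1 - t * xi)) 0 x))).
  { apply (is_RInt_ext (V := C_R_NormedModule)
      (fun s => RtoC (scal x (g (x * s + 0) / (1 - t * (x * s + 0)))))); [|exact Hsubst].
    intros s Hs. rewrite Rmin_left, Rmax_right in Hs by lra.
    assert (Hsx : 0 <= s * x <= x) by (split; nra).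
    assert (t * (s * x) <= t * x) by (apply Rmult_le_compat_l; lra).
    rewrite <- !RtoC_mult, Hfg by easy.
    rewrite <- RtoC_minus, <- RtoC_div, <- RtoC_mult by (rewrite Rmult_assoc; lra).
    f_equal. unfold scal; simpl; unfold mult; simpl.
    rewrite Rplus_0_r, (Rmult_comm x s), Rmult_assoc. field. lra. }
  rewrite (is_RInt_unique (V := C_R_CompleteNormedModule) _ _ _ _ Hint).
  rewrite <- RtoC_div by lra. reflexivity.
Qed.

End CesaroIntegral.

Fixpoint Clog_series (N : nat) (z : C) : C :=
  match N with
  | O => RtoC 0
  | S k => Cplus (Clog_series k z) (Cmult (RtoC (/ INR (S k))) (Cpow z (S k)))
  end.

Lemma entire_Clog_series N : entire (Clog_series N).
Proof.
  induction N as [|N IH]; [apply entire_const|].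
  apply (entire_plus _ _ IH), entire_mult; [apply entire_const|].
  apply entire_pow, entire_id.
Qed.

Lemma Clog_series_RtoC N u : Clog_series N (RtoC u) = RtoC (log_series N u).
Proof.
  induction N as [|N IH]; [reflexivity|]. cbn [Clog_series log_series].
  now rewrite IH, <- RtoC_pow, <- RtoC_mult, <- RtoC_plus.
Qed.

Lemma Cmod_Clog_series_le N z : Cmod (Clog_series N z) <= log_series N (Cmod z).
Proof.
  induction N as [|N IH]; cbn [Clog_series log_series].
  - rewrite Cmod_0. lra.
  - eapply Rle_trans; [apply Cmod_triangle|].
    rewrite Cmod_mult, Cmod_R, Cmod_pow, Rabs_right; [lra|].
    left. apply Rinv_0_lt_compat, lt_0_INR. lia.
Qed.

(* A polynomial truncation of (log (e / (1 - z)))^n = (1 - log (1 - z))^n, the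
   function for which the weight [vlog n] is designed. *)
Definition trunc_logpow (n N : nat) (z : C) : C := Cpow (Cplus 1 (Clog_series N z)) n.

Lemma holo_D_trunc_logpow n N : holo_D (trunc_logpow n N).
Proof.
  apply holo_D_of_entire, entire_pow, entire_plus; [apply entire_const|].
  apply entire_Clog_series.
Qed.

Lemma trunc_logpow_RtoC n N u :
  trunc_logpow n N (RtoC u) = RtoC ((1 + log_series N u) ^ n).
Proof. unfold trunc_logpow. now rewrite Clog_series_RtoC, <- RtoC_plus, <- RtoC_pow. Qed.

Lemma vlogE n r : r < 1 -> vlog n r = / (1 - ln (1 - r)) ^ n.
Proof.
  intros Hr. unfold vlog. rewrite ln_div, ln_exp; [easy | apply exp_pos | lra].
Qed.

Lemma wnorm_trunc_logpow_le n N : Rbar_le (wnorm (vlog n) (trunc_logpow n N)) 1.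
Proof.
  apply wnorm_le. intros z Hz. unfold inD in Hz.
  set (r := Cmod z) in *. assert (Hr : 0 <= r < 1) by (split; [apply Cmod_ge_0 | easy]).
  rewrite vlogE by easy.
  assert (Hlog : Cmod (Cplus 1 (Clog_series N z)) <= 1 - ln (1 - r)).
  { eapply Rle_trans; [apply Cmod_triangle|]. rewrite Cmod_1.
    generalize (Cmod_Clog_series_le N z) (log_series_le N r Hr). fold r. lra. }
  assert (Hpos : 0 < (1 - ln (1 - r)) ^ n).
  { apply pow_lt. generalize (log_series_nonneg_le N r r) (log_series_le N r Hr). lra. }
  unfold trunc_logpow. rewrite Cmod_pow.
  apply (Rmult_le_reg_r ((1 - ln (1 - r)) ^ n)); [easy|].
  rewrite Rmult_assoc, Rinv_l, Rmult_1_r, Rmult_1_l by lra.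
  apply pow_incr. split; [apply Cmod_ge_0 | easy].
Qed.

Lemma log_kernel_gap_ge d : 0 < d < 1 ->
  - ln d - 1 <= ln (1 - (1 - d * d) * (1 - d)) - ln (1 - (1 - d * d) * (1 - d * d)).
Proof.
  intros Hd.
  assert (Hnear : ln d <= ln (1 - (1 - d * d) * (1 - d))) by (apply ln_le; nra).
  assert (Hfar : ln (1 - (1 - d * d) * (1 - d * d)) <= ln 2 + 2 * ln d).
  { replace (ln 2 + 2 * ln d) with (ln (2 * (d * d))) by (rewrite !ln_mult; lra || nra).
    assert (0 < d * d < 1) by (split; nra).
    apply ln_le; nra. }
  assert (ln 2 < 1).
  { rewrite <- ln_exp with 1. apply ln_increasing; [lra|]. generalize (exp_ineq1 1). lra. }
  lra.
Qed.

Lemma Ces_trunc_logpow_ge n N x u : 0 < x < 1 -> 0 <= u <= x ->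
  (1 + log_series N u) ^ n * (ln (1 - x * u) - ln (1 - x * x))
    <= Cmod (Ces x (trunc_logpow n N) (RtoC x)).
Proof.
  intros Hx Hux. set (g := fun xi => (1 + log_series N xi) ^ n).
  assert (Hcont : forall xi, continuous g xi).
  { intros xi. apply (ex_derive_continuous (K := R_AbsRing) (V := R_NormedModule)).
    apply ex_derive_pow, (ex_derive_plus (fun _ => 1)); [apply ex_derive_const|].
    eexists. apply is_derive_log_series. }
  assert (Hmono : forall v w, 0 <= v <= w -> 0 <= g v <= g w).
  { intros v w Hvw. generalize (log_series_nonneg_le N v w Hvw). intros Hlog.
    split; [apply pow_le | apply pow_incr]; lra. }
  assert (Hx2 : x * x < 1) by nra.
  rewrite (Ces_RtoC x g); try lra;
    [| intros; apply trunc_logpow_RtoC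
     | apply ex_RInt_Cesaro_integrand; [lra | lra | exact Hx2 | intros; apply Hcont]].
  assert (Hint := RInt_Cesaro_integrand_ge x g x u ltac:(lra) Hux Hx2 (fun xi _ => Hcont xi)
                    (fun xi Hxi => proj1 (Hmono xi xi ltac:(lra)))
                    (fun xi Hxi => proj2 (Hmono u xi ltac:(lra)))).
  assert (Hgap : 0 <= ln (1 - x * u) - ln (1 - x * x)).
  { assert (x * u <= x * x) by (apply Rmult_le_compat_l; lra).
    assert (ln (1 - x * x) <= ln (1 - x * u)) by (apply ln_le; lra). lra. }
  assert (Hgu : 0 <= g u) by exact (proj1 (Hmono u u ltac:(lra))).
  revert Hint. generalize (RInt (fun xi => g xi / (1 - x * xi)) 0 x : R). intros I Hint.
  set (gap := ln (1 - x * u) - ln (1 - x * x)) in *.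
  fold (g u).
  assert (Hlow : 0 <= g u * (gap / x)).
  { apply Rmult_le_pos; [lra | apply Rdiv_le_0_compat; lra]. }
  assert (HIx : I <= I / x) by (apply Rle_div_self; lra).
  assert (Hgapx : g u * gap <= g u * (gap / x)).
  { apply Rmult_le_compat_l, Rle_div_self; lra. }
  rewrite Cmod_R, Rabs_right; lra.
Qed.

Lemma Ces_opnorm_vlog_ge n lam : 1 <= lam ->
  exists t, 0 <= t < 1 /\ Rbar_le ((lam - 1) / 3 ^ n) (Ces_opnorm (vlog n) t).
Proof.
  intros Hlam. set (d := exp (- lam)).
  assert (Hlnd : ln d = - lam) by apply ln_exp.
  assert (Hd : 0 < d < 1).
  { split; [apply exp_pos|]. rewrite <- exp_0. apply exp_increasing. lra. }
  set (u := 1 - d). set (x := 1 - d * d).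
  assert (Hx : 0 < x < 1) by (unfold x; nra).
  assert (Hux : 0 <= u <= x) by (unfold u, x; nra).
  destruct (log_series_approx u ltac:(lra)) as [N HN].
  replace (1 - u) with d in HN by (unfold u; ring). rewrite Hlnd in HN.
  assert (Hgu : lam ^ n <= (1 + log_series N u) ^ n) by (apply pow_incr; lra).
  assert (Hgap := log_kernel_gap_ge d Hd). rewrite Hlnd in Hgap. fold u x in Hgap.
  assert (HCes := Ces_trunc_logpow_ge n N x u Hx Hux).
  assert (Hvlog : vlog n x = / (1 + 2 * lam) ^ n).
  { rewrite vlogE by lra. f_equal. f_equal.
    replace (1 - x) with (d * d) by (unfold x; ring). rewrite ln_mult, Hlnd by lra. ring. }
  exists x. split; [lra|].
  apply Rbar_le_trans with (Cmod (Ces x (trunc_logpow n N) (RtoC x)) * vlog n (Cmod (RtoC x))).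
  2: { apply Rbar_le_trans with (wnorm (vlog n) (Ces x (trunc_logpow n N))).
       - apply wnorm_ge. unfold inD. rewrite Cmod_R, Rabs_right; lra.
       - apply Ces_opnorm_ge; [apply holo_D_trunc_logpow | apply wnorm_trunc_logpow_le]. }
  simpl. rewrite Cmod_R, Rabs_right, Hvlog by lra.
  assert (H3 : (1 + 2 * lam) ^ n <= 3 ^ n * lam ^ n).
  { rewrite <- Rpow_mult_distr. apply pow_incr. lra. }
  assert (0 < lam ^ n) by (apply pow_lt; lra).
  assert (0 < 3 ^ n) by (apply pow_lt; lra).
  assert (Hpos : 0 < (1 + 2 * lam) ^ n) by (apply pow_lt; lra).
  apply Rle_trans with (lam ^ n * (lam - 1) / (3 ^ n * lam ^ n)).
  - right. field. lra.
  - unfold Rdiv. apply Rmult_le_compat.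
    + apply Rmult_le_pos; lra.
    + left. apply Rinv_0_lt_compat. nra.
    + apply Rle_trans with ((1 + log_series N u) ^ n * (lam - 1));
        [apply Rmult_le_compat_r; lra|].
      apply Rle_trans with ((1 + log_series N u) ^ n * (ln (1 - x * u) - ln (1 - x * x)));
        [apply Rmult_le_compat_l; lra | exact HCes].
    + apply Rinv_le_contravar; lra.
Qed.

Theorem proposition2p12 (n : nat) :
  Rbar_lub (fun y => exists t : R, 0 <= t < 1 /\ y = Ces_opnorm (vlog n) t)
  = p_infty.
Proof.
  apply Rbar_lub_p_infty. intros M.
  assert (H3 : 0 < 3 ^ n) by (apply pow_lt; lra).
  destruct (Ces_opnorm_vlog_ge n (1 + 3 ^ n * Rmax 0 M)) as [t [Ht Hle]].
  { generalize (Rmax_l 0 M). nra. }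
  exists (Ces_opnorm (vlog n) t). split; [now exists t|].
  apply Rbar_le_trans with ((1 + 3 ^ n * Rmax 0 M - 1) / 3 ^ n); [|exact Hle].
  simpl. replace ((1 + 3 ^ n * Rmax 0 M - 1) / 3 ^ n) with (Rmax 0 M) by (field; lra).
  apply Rmax_r.
Qed.
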